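(* Let $(X,\sigma)$ be a primitive aperiodic $S$-adic subshift based on substitutions $\chi_i:\mathcal A_i\to\mathcal A_{i-1}^+$, $i\in\mathbb N$. If for every $k\in\mathbb N$ there are $i<j$ and letters $a\in\mathcal A_{i-1}$, $b\in\mathcal A_j$ such that $a^k$ is a subword of $\chi_i\circ\cdots\circ\chi_j(b)$, then $(X,\sigma)$ is not linearly recurrent.
   Context: Given finite alphabets $\mathcal A_i$ and substitutions $\chi_i:\mathcal A_i\to\mathcal A_{i-1}^+$ (extended to words by concatenation), the $S$-adic subshift $X$ is the shift-orbit closure of the set of accumulation points of $\{\chi_1\circ\cdots\circ\chi_n(a):n\in\mathbb N,a\in\mathcal A_n\}$, with $\sigma$ the left shift. It is primitive if for every $m\in\mathbb N$ there is $n\ge m$ such that for all $a\in\mathcal A_n$ the word $\chi_m\circ\cdots\circ\chi_n(a)$ contains every letter of $\mathcal A_{m-1}$. It is aperiodic if there are no $x\in X$, $k\in\mathbb N$ with $\sigma^kx=x$. It is linearly recurrent if there is $L$ such that for every $x\in X$ every subword $w$ of $x$ reappears in $x$ with gap at most $L|w|$. *)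

From mathcomp Require Import all_boot all_order all_algebra.
Set Implicit Arguments. Unset Strict Implicit. Unset Printing Implicit Defensive.
Import GRing.Theory Num.Theory.

(* Indexing convention: alphabets [A n] for n : nat (paper's A_n, n >= 0);
   [chi n : A n.+1 -> seq (A n)] is the paper's chi_{n+1} : A_{n+1} -> A_n^+. *)

Section SAdic.
Variable A : nat -> finType.
Variable chi : forall n, A n.+1 -> seq (A n).

Definition subst_word (n : nat) (w : seq (A n.+1)) : seq (A n) :=
  flatten (map (@chi n) w).

(* scomp i d = chi_{i+1} o ... o chi_{i+d} : words over A_{d+i} -> words over A_i
   (identity for d = 0). *)
Arguments subst_word n w : clear implicits.
Fixpoint scomp (i d : nat) : seq (A (d + i)) -> seq (A i) :=
  match d return seq (A (d + i)) -> seq (A i) with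
  | 0 => fun w => w
  | d'.+1 => fun w => @scomp i d' (@subst_word (d' + i) w)
  end.

Definition nonerasing : Prop := forall n (b : A n.+1), chi b != [::].

(* primitivity: for every m >= 1 there is n >= m such that for all a in A_n,
   chi_m o ... o chi_n (a) contains every letter of A_{m-1}.
   (i = m-1, d = n-m+1 >= 1) *)
Definition primitive : Prop :=
  forall i : nat, exists d : nat,
    forall (a : A (d.+1 + i)) (c : A i), c \in @scomp i d.+1 [:: a].

Definition config := int -> A 0.

Definition window (x : config) (m : int) (len : nat) : seq (A 0) :=
  mkseq (fun k => x (m + k%:Z)%R) len.

Definition in_X (x : config) : Prop :=
  forall (m : int) (len : nat), exists (d : nat) (a : A (d.+1 + 0)),
    infix (window x m len) (@scomp 0 d.+1 [:: a]).

Definition shift (x : config) : config := fun n => x (n + 1)%R.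

Definition aperiodic : Prop :=
  ~ exists (x : config) (k : nat), [/\ in_X x, (0 < k)%N & forall n, iter k shift x n = x n].

Definition linearly_recurrent : Prop :=
  exists L : nat, forall x : config, in_X x ->
    forall (q : int) (len : nat), (0 < len)%N ->
      exists q' : int, [/\ (q < q')%R, (q' <= q + (L * len)%N%:Z)%R &
                           window x q' len = window x q len].
End SAdic.
Arguments scomp {A} chi i d _.

(* If X is linearly recurrent with constant L and x in X is p-periodic on a
   stretch that ends on the left at z (x_z <> x_(z+p)), then the word
   x[z, z+p] reappears within distance L(p+1), where x is still p-periodic,
   which is impossible; so no stretch of length about (L+1)p can end.
   The hypothesis puts u^(2L+1), |u| = p, in the language of X.  Primitivity
   and nonerasure allow every word of the language to be extended on both
   sides, so some x in X carries u^(2L+1) at position 0.  Its p-periodic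
   stretch must end on the left: otherwise the left half of x is p-periodic
   and, repeated, gives a p-periodic point of X, against aperiodicity. *)

From mathcomp Require Import all_boot all_order all_algebra zify.
From Stdlib Require Import Classical ClassicalEpsilon.
Set Implicit Arguments. Unset Strict Implicit. Unset Printing Implicit Defensive.
Import GRing.Theory Num.Theory.

Section TwoSidedExtension.
Variables (T : eqType) (P : seq T -> Prop) (x0 : T).
Hypothesis P_infix : forall v w, infix v w -> P w -> P v.
Variable ext : seq T -> seq T * seq T.
Hypothesis ext_spec : forall w, P w ->
  [/\ 0 < size (ext w).1, 0 < size (ext w).2 & P ((ext w).1 ++ w ++ (ext w).2)].
Variable w0 : seq T.
Hypothesis P_w0 : P w0.

Fixpoint grown n : seq T :=
  if n is n'.+1 then (ext (grown n')).1 ++ grown n' ++ (ext (grown n')).2 else w0.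

Fixpoint grown_offset n : nat :=
  if n is n'.+1 then size (ext (grown n')).1 + grown_offset n' else 0.

Lemma P_grown n : P (grown n).
Proof. by elim: n => [|n IH] //=; case: (ext_spec IH). Qed.

Lemma grown_offset_bounds n :
  n <= grown_offset n /\ grown_offset n + n <= size (grown n).
Proof.
elim: n => [|n [le_n_off le_off_size]] //=.
have [l_gt0 r_gt0 _] := ext_spec (P_grown n).
rewrite !size_cat; lia.
Qed.

Lemma grown_nested k n : exists pre suf, grown (k + n) = pre ++ grown n ++ suf
  /\ grown_offset (k + n) = size pre + grown_offset n.
Proof.
elim: k => [|k [pre [suf [grown_kn offset_kn]]]].
  by exists [::], [::]; rewrite cats0.
exists ((ext (grown (k + n))).1 ++ pre), (suf ++ (ext (grown (k + n))).2).
rewrite addSn /= offset_kn size_cat addnA; split=> //.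
by rewrite {2}grown_kn !catA.
Qed.

Definition centered n (z : int) : T := nth x0 (grown n) (absz ((grown_offset n)%:Z + z)%R).

Lemma centered_stable n N z : n <= N -> `|z|%N < n -> centered N z = centered n z.
Proof.
rewrite /centered => le_nN lt_zn; have [k ->] : exists k, N = k + n by exists (N - n); lia.
have [pre [suf [-> ->]]] := grown_nested k n.
have [le_n_off le_off_size] := grown_offset_bounds n.
rewrite (_ : absz _ = size pre + absz ((grown_offset n)%:Z + z)%R); last lia.
by rewrite nth_cat ltnNge leq_addr addKn /= nth_cat ifT //; lia.
Qed.

Lemma centered_prefix n k : k < size w0 -> centered n k%:Z = nth x0 w0 k.
Proof.
rewrite /centered => lt_k.
have [pre [suf []]] := grown_nested n 0; rewrite addn0 => -> ->.
rewrite (_ : absz _ = size pre + k); last by rewrite addn0; lia.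
by rewrite nth_cat ltnNge leq_addr addKn /= nth_cat lt_k.
Qed.

Definition limit_config (z : int) : T := centered `|z|.+1 z.

Lemma P_limit_window m len : P (mkseq (fun k => limit_config (m + k%:Z)%R) len).
Proof.
set N := (`|m| + len)%N; have [le_N_off le_off_size] := grown_offset_bounds N.
suff -> : mkseq (fun k => limit_config (m + k%:Z)%R) len
          = take len (drop (absz ((grown_offset N)%:Z + m)%R) (grown N)).
  exact: P_infix (infix_trans (infix_take _ _) (infix_drop _ _)) (P_grown N).
apply: (@eq_from_nth _ x0) => [|k]; first by rewrite size_mkseq size_takel ?size_drop; lia.
rewrite size_mkseq => lt_k; rewrite nth_mkseq // nth_take // nth_drop.
rewrite /limit_config -(centered_stable (N := N)); try lia.
by rewrite /centered; congr nth; lia.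
Qed.

End TwoSidedExtension.

Lemma extendable_language_config (T : eqType) (P : seq T -> Prop) (x0 : T) w0 :
  (forall v w, infix v w -> P w -> P v) ->
  (forall w, P w -> exists l r, [/\ 0 < size l, 0 < size r & P (l ++ w ++ r)]) ->
  P w0 -> exists x : int -> T,
    (forall (m : int) len, P (mkseq (fun k => x (m + k%:Z)%R) len)) /\
    (forall k, k < size w0 -> x k%:Z%R = nth x0 w0 k).
Proof.
move=> P_infix P_ext P_w0.
have [ext ext_spec] : exists ext : seq T -> seq T * seq T, forall w, P w ->
    [/\ 0 < size (ext w).1, 0 < size (ext w).2 & P ((ext w).1 ++ w ++ (ext w).2)].
  apply: (ClassicalEpsilon.choice (fun w (lr : seq T * seq T) => P w ->
    [/\ 0 < size lr.1, 0 < size lr.2 & P (lr.1 ++ w ++ lr.2)])) => w.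
  case: (classic (P w)) => [/P_ext [l [r lr]]|notPw]; first by exists (l, r).
  by exists ([::], [::]).
exists (limit_config x0 ext w0); split; first exact: P_limit_window.
by move=> k; apply: centered_prefix.
Qed.

Lemma nth_flatten_nseq (T : Type) (x0 : T) (u : seq T) k n :
  n < k * size u -> nth x0 (flatten (nseq k u)) n = nth x0 u (n %% size u).
Proof.
elim: k n => [//|k IH] n lt_n /=; rewrite nth_cat.
case: ltnP => [lt_nu | le_un]; first by rewrite modn_small.
rewrite IH; first by rewrite -{2}(subnK le_un) modnDr.
by move: lt_n; rewrite mulSn ltn_subLR.
Qed.

Lemma left_periodic_mod (T : Type) (x : int -> T) (p : nat) : 0 < p ->
  (forall z, (z < 0)%R -> x z = x (z + p%:Z)%R) ->
  forall z, (z < 0)%R -> x z = x ((z %% p)%Z - p%:Z)%R.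
Proof.
move=> p_gt0 per z z_lt0.
have per_mul t c : (c + (t * p)%:Z < 0)%R -> x c = x (c + (t * p)%:Z)%R.
  elim: t c => [|t IH] c lt_c; first by congr x; lia.
  rewrite IH; last lia.
  by rewrite per; [congr x | ]; lia.
by rewrite (per_mul (absz (- (z %/ p)%Z - 1)%R)); [congr x | ]; nia.
Qed.

Section SAdicLanguage.
Variables (A : nat -> finType) (chi : forall n, A n.+1 -> seq (A n)).

Fixpoint to_base n : seq (A n) -> seq (A 0) :=
  match n return seq (A n) -> seq (A 0) with
  | 0 => id
  | n'.+1 => fun w => to_base (subst_word chi w)
  end.

Lemma to_base_nil n : to_base ([::] : seq (A n)) = [::].
Proof. by elim: n. Qed.

Lemma to_base_cat n (u v : seq (A n)) : to_base (u ++ v) = to_base u ++ to_base v.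
Proof. by elim: n u v => [//|n IH] u v /=; rewrite /subst_word map_cat flatten_cat IH. Qed.

Lemma to_base_cons n (c : A n) w : to_base (c :: w) = to_base [:: c] ++ to_base w.
Proof. by rewrite -to_base_cat. Qed.

Lemma to_base_nseq n k (a : A n) : to_base (nseq k a) = flatten (nseq k (to_base [:: a])).
Proof. by elim: k => [|k IH]; rewrite ?to_base_nil //= to_base_cons IH. Qed.

Lemma to_base_scomp i d (w : seq (A (d + i))) : to_base (scomp chi i d w) = to_base w.
Proof. by elim: d w => [//|d IH] w; apply: IH. Qed.

Lemma infix_to_base n (u v : seq (A n)) : infix u v -> infix (to_base u) (to_base v).
Proof. by case/infixP=> [s [s' ->]]; rewrite !to_base_cat infix_infix. Qed.

Lemma size_to_base_le n (w : seq (A n)) :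
  size (to_base w) <= size w * \max_(c : A n) size (to_base [:: c]).
Proof.
elim: w => [|c w IH]; first by rewrite to_base_nil.
rewrite to_base_cons size_cat mulSn leq_add //.
exact: (leq_bigmax (F := fun c => size (to_base [:: c]))).
Qed.

Definition lang (w : seq (A 0)) : Prop :=
  exists n (b : A n), 0 < n /\ infix w (to_base [:: b]).

Lemma lang_infix v w : infix v w -> lang w -> lang v.
Proof. by move=> vw [n [b [n_gt0 wb]]]; exists n, b; split; last exact: infix_trans wb. Qed.

Lemma lang_to_base i d (b : A (d + i)) (w : seq (A i)) :
  0 < d + i -> infix w (scomp chi i d [:: b]) -> lang (to_base w).
Proof. by move=> lvl_gt0 /infix_to_base; rewrite to_base_scomp; exists (d + i), b. Qed.

Lemma in_X_of_lang (x : config A) : (forall m len, lang (window x m len)) -> in_X chi x.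
Proof.
move=> x_lang m len; have [n [b [n_gt0 win_b]]] := x_lang m len.
have [d n_eq] : exists d, n = d.+1 + 0 by exists n.-1; lia.
subst n; exists d, b.
by rewrite -(to_base_scomp (i := 0)) in win_b.
Qed.

Lemma long_images : (forall k, exists w, lang w /\ k <= size w) ->
  forall M k, exists g (b : A (g + M)), k < size (scomp chi M g [:: b]).
Proof.
move=> lang_unbounded M k.
(* A word longer than B + k C only occurs in the image of a letter of level
   above M, which is then the image of a word of length > k at level M. *)
pose B := \max_(j < M.+1) \max_(b : A j) size (to_base [:: b]).
pose C := \max_(c : A M) size (to_base [:: c]).
have [w [[n [b [_ w_b]]] w_long]] := lang_unbounded (B + k * C).+1.
have b_long := leq_trans w_long (size_infix w_b).
have [le_nM | lt_Mn] := leqP n M.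
  suff : size (to_base [:: b]) <= B + k * C by rewrite leqNgt b_long.
  apply: leq_trans (leq_addr _ _).
  apply: leq_trans (leq_bigmax (Ordinal (leq_ltn_trans le_nM (ltnSn M)))).
  exact: (leq_bigmax (F := fun b : A n => size (to_base [:: b]))).
have [g n_eq] : exists g, n = g + M by exists (n - M); lia.
subst n; exists g, b; rewrite ltnNge; apply/negP => small.
rewrite -(to_base_scomp (i := M)) in b_long.
have := leq_trans b_long (leq_trans (size_to_base_le _) (leq_mul small (leqnn C))).
by rewrite ltnNge leq_addl.
Qed.

Section Nonerasing.
Hypothesis chi_ne : nonerasing chi.

Lemma to_base_neq0 n (w : seq (A n)) : w != [::] -> to_base w != [::].
Proof.
elim: n w => [//|n IH] [//|c w] _ /=; apply: IH.
by rewrite /subst_word /=; case: (chi c) (chi_ne c).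
Qed.

Lemma size_to_base_ge n (w : seq (A n)) : size w <= size (to_base w).
Proof.
elim: w => [//|c w IH]; rewrite to_base_cons size_cat.
by have := to_base_neq0 (w := [:: c]); case: (to_base _) => //= *; lia.
Qed.

Lemma lang_extend : primitive chi -> (forall k, exists w, lang w /\ k <= size w) ->
  forall w, lang w -> exists l r, [/\ 0 < size l, 0 < size r & lang (l ++ w ++ r)].
Proof.
move=> chi_prim lang_unbounded w [n [a [n_gt0 w_a]]].
have [e a_in] := chi_prim n.
have [g [b]] := long_images lang_unbounded (e.+1 + n) 2.
case b_eq: (scomp chi (e.+1 + n) g [:: b]) => [|c1 [|c [|c3 t]]] // _.
have [s1 [s2 c_eq]] : exists s1 s2, scomp chi n e.+1 [:: c] = s1 ++ a :: s2.
  by case/splitPr: (a_in c a) => s1 s2; exists s1, s2.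
have [p [q a_eq]] : exists p q, to_base [:: a] = p ++ w ++ q by apply/infixP.
have b_split : to_base [:: b] =
    (to_base [:: c1] ++ to_base s1 ++ p) ++ w ++ (q ++ to_base s2 ++ to_base (c3 :: t)).
  rewrite -(to_base_scomp (i := e.+1 + n)) b_eq (to_base_cons c1) (to_base_cons c).
  rewrite -(to_base_scomp (i := n) [:: c]) c_eq to_base_cat (to_base_cons a) a_eq.
  by rewrite !catA.
exists (to_base [:: c1] ++ to_base s1 ++ p), (q ++ to_base s2 ++ to_base (c3 :: t)).
split; rewrite ?size_cat.
- by have := to_base_neq0 (w := [:: c1]); case: (to_base _) => //= *; lia.
- by have := to_base_neq0 (w := c3 :: t); case: (to_base _) => //= *; lia.
by exists (g + (e.+1 + n)), b; split; [lia | rewrite b_split infix_refl].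
Qed.

End Nonerasing.
End SAdicLanguage.

Section Periodicity.
Variables (A : nat -> finType) (chi : forall n, A n.+1 -> seq (A n)).
Local Open Scope ring_scope.

Lemma iter_shift k (x : config A) n : iter k (@shift A) x n = x (n + k%:Z).
Proof. by elim: k n => [|k IH] n; rewrite ?iterS /shift ?IH; congr x; lia. Qed.

Lemma aperiodic_left_break (x : config A) (p : nat) :
  aperiodic chi -> in_X chi x -> (0 < p)%N -> exists2 z, z < 0 & x z != x (z + p%:Z).
Proof.
move=> ap xX p_gt0; apply: NNPP => no_break.
have per z : z < 0 -> x z = x (z + p%:Z).
  by move=> z_lt0; apply/eqP; apply: contra_notT no_break => br; exists z.
pose y : config A := fun z => x ((z %% p)%Z - p%:Z).
apply: ap; exists y, p; split=> // [m len | n]; last first.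
  by rewrite iter_shift /y modzDr.
have -> : window y m len = window x (m - (`|m| + len)%N%:Z * p%:Z) len.
  rewrite /window /mkseq; apply/eq_in_map => k; rewrite mem_iota => /andP [_ lt_k].
  rewrite /y [RHS](left_periodic_mod p_gt0 per); last nia.
  rewrite -(modzMDl (- (`|m| + len)%N%:Z) (m + k%:Z)); congr (x (modz _ _ - _)); lia.
exact: xX.
Qed.

Lemma aperiodic_last_break (x : config A) (p : nat) :
  aperiodic chi -> in_X chi x -> (0 < p)%N -> exists z, [/\ z < 0, x z != x (z + p%:Z)
    & forall z', z < z' < 0 -> x z' = x (z' + p%:Z)].
Proof.
move=> ap xX p_gt0; have [z0 z0_lt0 z0_break] := aperiodic_left_break ap xX p_gt0.
pose breaks_at (j : nat) := x (- j.+1%:Z) != x (- j.+1%:Z + p%:Z).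
have : exists j, breaks_at j.
  by exists `|z0|.-1; rewrite /breaks_at (_ : - _ = z0) //; lia.
case/ex_minnP=> j j_break j_min; exists (- j.+1%:Z); split=> // z' /andP [lt_z' z'_lt0].
apply/eqP/negPn/negP => z'_break.
have := j_min `|z'|.-1; rewrite /breaks_at (_ : - _ = z'); last lia.
by move=> /(_ z'_break); lia.
Qed.

Lemma linearly_recurrent_breaks : linearly_recurrent chi -> exists L : nat,
  forall x : config A, in_X chi x -> forall z (p : nat), x z != x (z + p%:Z) ->
    exists2 z', z < z' <= z + (L * p.+1)%N%:Z & x z' != x (z' + p%:Z).
Proof.
move=> [L lr]; exists L => x xX z p z_break.
have [z' [lt_zz' le_z' win_eq]] := lr x xX z p.+1 isT.
exists z'; first by rewrite lt_zz'.
have := congr1 (nth (x z) ^~ 0%N) win_eq; have := congr1 (nth (x z) ^~ p) win_eq.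
by rewrite !nth_mkseq // !addr0 => -> ->.
Qed.

End Periodicity.

Theorem lemma2p5 (A : nat -> finType) (chi : forall n, A n.+1 -> seq (A n)) :
  nonerasing chi -> primitive chi -> aperiodic chi ->
  (forall k : nat, exists (i d : nat) (a : A i) (b : A (d.+2 + i)),
      infix (nseq k a) (@scomp A chi i d.+2 [:: b])) ->
  ~ linearly_recurrent chi.
Proof.
move=> chi_ne chi_prim chi_aper powers chi_lr.
have lang_powers k : exists i (a : A i), lang chi (to_base chi (nseq k a)).
  by have [i [d [a [b ab]]]] := powers k; exists i, a; apply: lang_to_base ab.
have lang_unbounded k : exists w, lang chi w /\ k <= size w.
  have [i [a ak_lang]] := lang_powers k; exists (to_base chi (nseq k a)); split=> //.
  by rewrite -{1}(size_nseq k a) size_to_base_ge.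
have [L breaks] := linearly_recurrent_breaks chi_lr.
have [i [a power_lang]] := lang_powers L.*2.+1.
have u_neq0 : to_base chi [:: a] != [::] by rewrite to_base_neq0.
have x0 : A 0 by case: (to_base chi [:: a]) u_neq0 => [|c].
set u := to_base chi [:: a]; set p := size u.
have p_gt0 : 0 < p by rewrite lt0n size_eq0.
have [x [x_lang x_power]] := extendable_language_config x0 (@lang_infix A chi)
  (lang_extend chi_ne chi_prim lang_unbounded) power_lang.
have xX : in_X chi x by apply: in_X_of_lang.
have x_periodic (n : nat) : n + p < L.*2.+1 * p -> x n%:Z%R = x (n%:Z + p%:Z)%R.
  have power_size : size (to_base chi (nseq L.*2.+1 a)) = L.*2.+1 * p.
    by rewrite to_base_nseq size_flatten /shape map_nseq sumn_nseq mulnC.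
  move=> lt_n; rewrite -PoszD !x_power ?power_size; try lia.
  by rewrite to_base_nseq !nth_flatten_nseq -/u -/p ?modnDr //; lia.
have [z [z_lt0 z_break z_last]] := aperiodic_last_break chi_aper xX p_gt0.
have [z' /andP [lt_zz' le_z'] z'_break] := breaks x xX z p z_break.
have [z'_lt0 | z'_ge0] := ltrP z' 0; first by rewrite z_last ?lt_zz' ?eqxx in z'_break.
have [m z'_eq] : exists m : nat, z' = m%:Z%R by exists `|z'|%N; lia.
by move: z'_break; rewrite z'_eq x_periodic ?eqxx //; nia.
Qed.
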